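(* Let $A(\chi)$ be the $n\times n$ matrix over the field of rational functions in indeterminates $\chi_1,\dots,\chi_n,\hbar,q_1,\dots,q_n$ with $A_{ii}=\chi_i$ and $A_{ij}=\frac{\hbar(1-q_i)(1+q_j)}{(1-q_i/q_j)(1-q_iq_j)}$ for $i\ne j$. For $\sigma\in\mathfrak S_n$ put $m_\sigma=A_{1\sigma(1)}\cdots A_{n\sigma(n)}$. Then $$\det A(\chi)=\sum_\sigma(-1)^{\ell(\sigma)}m_\sigma,$$ where the sum runs only over those permutations $\sigma$ all of whose nontrivial cycles have even length. Consequently $\det A(\chi)=(-1)^n\det A(-\chi)$, where $A(-\chi)$ denotes $A(\chi)$ with each $\chi_i$ replaced by $-\chi_i$.
   Context: $\ell(\sigma)$ denotes the number of inversions of $\sigma$, so $(-1)^{\ell(\sigma)}$ is its sign. *)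

From HB Require Import structures.
From mathcomp Require Import all_boot all_order all_algebra all_fingroup.
From mathcomp Require Import mpoly fraction.
Set Implicit Arguments. Unset Strict Implicit. Unset Printing Implicit Defensive.
Import Order.TTheory GRing.Theory.
Local Open Scope ring_scope.

(* Polynomial ring over Q in the 2n+1 indeterminates
   chi_0..chi_{n-1} (index i), hbar (index n), q_0..q_{n-1} (index n+1+i). *)
Definition RFpoly (n : nat) := {mpoly rat[(n + n).+1]}.
Definition RF (n : nat) := {fraction (RFpoly n)}.
Local Notation "x %:F" := (@FracField.tofrac _ x).

Definition chiv (n : nat) (i : 'I_n) : RF n := ('X_(inord i) : RFpoly n)%:F.
Definition hbarv (n : nat) : RF n := ('X_(inord n) : RFpoly n)%:F.
Definition qv (n : nat) (i : 'I_n) : RF n := ('X_(inord (n + 1 + i)) : RFpoly n)%:F.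

Definition Amat (n : nat) (c : 'I_n -> RF n) : 'M[RF n]_n :=
  \matrix_(i < n, j < n)
    if i == j then c i
    else hbarv n * (1 - qv i) * (1 + qv j)
         / ((1 - qv i / qv j) * (1 - qv i * qv j)).

Definition Achi (n : nat) : 'M[RF n]_n := Amat (@chiv n).
Definition Anegchi (n : nat) : 'M[RF n]_n := Amat (fun i => - chiv i).

Definition even_cycles (n : nat) (s : 'S_n) : bool :=
  [forall C in porbits s, (#|C| == 1)%N || ~~ odd #|C|].

Definition msigma (n : nat) (A : 'M[RF n]_n) (s : 'S_n) : RF n :=
  \prod_(i < n) A i (s i).

From HB Require Import structures.
From mathcomp Require Import all_boot all_order all_algebra all_fingroup.
From mathcomp Require Import mpoly fraction.
From mathcomp Require Import ring zify.
Set Implicit Arguments. Unset Strict Implicit. Unset Printing Implicit Defensive.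
Import GRing.Theory.
Local Open Scope ring_scope.
Local Notation "x %:F" := (@FracField.tofrac _ x).

(* With the weights psi_i = q_i (1 + q_i) / (1 - q_i), the off-diagonal entries
   of A satisfy the rescaled skew-symmetry  A_ji psi_j = - A_ij psi_i  (i <> j).
   Both claims are consequences of this single identity:
   - Reversing one cycle of length k >= 2 of a permutation s keeps its sign
     and, by the skew-symmetry, multiplies m_s by (-1)^k.  Reversing the first
     cycle of odd length >= 3 is therefore a sign-reversing involution on the
     permutations having such a cycle, so their terms in the Leibniz expansion
     of det A cancel, leaving the even-cycle permutations.
   - The skew-symmetry holds on the diagonal as well when A(chi) is compared
     with A(-chi): A(chi)^T D = - D A(-chi) with D = diag(psi), and taking
     determinants gives det A(chi) = (-1)^n det A(-chi). *)

Section CycleReversal.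
Variable T : finType.
Implicit Types (s t : {perm T}) (x y z : T).

Lemma porbit_image s y : porbit s (s y) = porbit s y.
Proof. by have := porbit_perm s 1 y; rewrite expg1. Qed.

Lemma porbit_imageV s y : porbit s (s^-1%g y) = porbit s y.
Proof. by rewrite -porbitV porbit_image porbitV. Qed.

Lemma mem_porbit_image s x y : (s y \in porbit s x) = (y \in porbit s x).
Proof. by rewrite porbit_sym porbit_image porbit_sym. Qed.

Lemma mem_porbit_imageV s x y : (s^-1%g y \in porbit s x) = (y \in porbit s x).
Proof. by rewrite porbit_sym porbit_imageV porbit_sym. Qed.

Lemma porbit_agree s t x : {in porbit s x, t =1 s} -> porbit t x = porbit s x.
Proof.
move=> eq_ts.
have iterE i : (t ^+ i)%g x = (s ^+ i)%g x.
  rewrite !permX; elim: i => //= i ->.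
  by rewrite eq_ts // -permX mem_porbit.
by apply/setP => z; apply/porbitP/porbitP => -[i ->]; exists i; rewrite iterE.
Qed.

Definition rev_cycle_fun s x y := if y \in porbit s x then s^-1%g y else s y.

Lemma rev_cycle_fun_inj s x : injective (rev_cycle_fun s x).
Proof.
move=> y z; rewrite /rev_cycle_fun.
case: ifP => hy; case: ifP => hz e; try exact: perm_inj e.
- by move: hy; rewrite -mem_porbit_imageV e mem_porbit_image hz.
- by move: hz; rewrite -mem_porbit_imageV -e mem_porbit_image hy.
Qed.

Definition rev_cycle s x : {perm T} := perm (@rev_cycle_fun_inj s x).

Lemma rev_cycleE s x y : rev_cycle s x y = rev_cycle_fun s x y.
Proof. by rewrite permE. Qed.

Lemma porbit_rev_cycle s x y : porbit (rev_cycle s x) y = porbit s y.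
Proof.
have [y_in|y_out] := boolP (y \in porbit s x).
  have eq_yx : porbit s y = porbit s x by apply/eqP; rewrite eq_porbit_mem.
  rewrite -(porbitV s); apply: porbit_agree => z; rewrite porbitV eq_yx => z_in.
  by rewrite rev_cycleE /rev_cycle_fun z_in.
apply: porbit_agree => z z_in; rewrite rev_cycleE /rev_cycle_fun.
case: ifP => // z_in'; have /eqP eq_zy : porbit s z == porbit s y.
  by rewrite eq_porbit_mem.
have /eqP eq_zx : porbit s z == porbit s x by rewrite eq_porbit_mem.
by move: y_out; rewrite -eq_porbit_mem -eq_zy eq_zx eqxx.
Qed.

Lemma porbits_rev_cycle s x : porbits (rev_cycle s x) = porbits s.
Proof. by apply: eq_imset => y; rewrite porbit_rev_cycle. Qed.

Lemma odd_perm_rev_cycle s x : odd_perm (rev_cycle s x) = odd_perm s.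
Proof. by rewrite /odd_perm porbits_rev_cycle. Qed.

Lemma rev_cycleK s x : rev_cycle (rev_cycle s x) x = s.
Proof.
apply/permP => z; rewrite rev_cycleE /rev_cycle_fun porbit_rev_cycle.
case: ifP => z_in; last by rewrite rev_cycleE /rev_cycle_fun z_in.
apply: (@perm_inj _ (rev_cycle s x)).
by rewrite permKV rev_cycleE /rev_cycle_fun mem_porbit_image z_in permK.
Qed.

Definition odd_cycle_at s y := (1 < #|porbit s y|)%N && odd #|porbit s y|.

Definition has_odd_cycle s := [exists y, odd_cycle_at s y].

Lemma odd_cycle_at_rev s x : odd_cycle_at (rev_cycle s x) =1 odd_cycle_at s.
Proof. by move=> y; rewrite /odd_cycle_at porbit_rev_cycle. Qed.

Definition flip_odd_cycle s :=
  if [pick y | odd_cycle_at s y] is Some y then rev_cycle s y else s.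

Lemma flip_odd_cycleK : involutive flip_odd_cycle.
Proof.
move=> s; rewrite {2}/flip_odd_cycle.
case E: [pick y | odd_cycle_at s y] => [y|]; last by rewrite /flip_odd_cycle E.
by rewrite /flip_odd_cycle (eq_pick (odd_cycle_at_rev s y)) E rev_cycleK.
Qed.

Lemma has_odd_cycle_flip s : has_odd_cycle (flip_odd_cycle s) = has_odd_cycle s.
Proof.
rewrite /flip_odd_cycle; case: pickP => // y _.
by apply: eq_existsb => z; rewrite odd_cycle_at_rev.
Qed.

Lemma flip_odd_cycleE s : has_odd_cycle s ->
  exists2 y, odd_cycle_at s y & flip_odd_cycle s = rev_cycle s y.
Proof.
rewrite /flip_odd_cycle => /existsP[z odd_z].
by case: pickP => [y odd_y|/(_ z)]; [exists y | rewrite odd_z].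
Qed.

Lemma porbit_fixed s y : s y = y -> porbit s y = [set y].
Proof.
move=> fix_y; apply/setP => z; rewrite inE.
apply/porbitP/eqP => [[i ->]|->]; last by exists 0%N; rewrite expg0 perm1.
by rewrite permX; elim: i => //= i ->.
Qed.

Lemma odd_cycle_at_moved s y z : odd_cycle_at s y -> z \in porbit s y -> s z != z.
Proof.
move=> /andP[big_y _] z_in; apply/eqP => /porbit_fixed fix_z.
have /eqP eq_zy : porbit s z == porbit s y by rewrite eq_porbit_mem.
by move: big_y; rewrite -eq_zy fix_z cards1.
Qed.

End CycleReversal.

Lemma even_cyclesE n (s : 'S_n) : even_cycles s = ~~ has_odd_cycle s.
Proof.
rewrite negb_exists; apply/forall_inP/forallP => [even_s y|no_odd _ /imsetP[y _ ->]].
  have := even_s (porbit s y) (imset_f _ isT).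
  by rewrite /odd_cycle_at; case: eqP => [->|_ /= /negbTE ->]; rewrite ?andbF.
move: (no_odd y); rewrite /odd_cycle_at negb_and -leqNgt.
by case/orP => [le1|->]; rewrite ?orbT // eqn_leq le1 lt0n card_porbit_neq0.
Qed.

Section RescaledSkew.
Variables (F : fieldType) (T : finType) (a : T -> T -> F) (w : T -> F).
Hypothesis w_neq0 : forall i, w i != 0.
Hypothesis a_skew : forall i j, i != j -> a j i * w j = - (a i j * w i).

Lemma prod_backwards (s : {perm T}) (C : {set T}) :
  (forall j, (s j \in C) = (j \in C)) -> {in C, forall j, s j != j} ->
  \prod_(i in C) a i (s^-1%g i) = (-1) ^+ #|C| * \prod_(i in C) a i (s i).
Proof.
move=> stableC moved.
have shift (f : T -> F) : \prod_(i in C) f (s i) = \prod_(i in C) f i.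
  by rewrite [RHS](reindex_inj (@perm_inj _ s)); apply: eq_bigl => j; rewrite stableC.
have W_neq0 : \prod_(i in C) w i != 0 by apply/prodf_neq0 => i _.
apply: (mulIf W_neq0).
rewrite -(shift (fun i => a i (s^-1%g i))) -[X in _ * X = _](shift w) -big_split /=.
under eq_bigr do rewrite permK.
under eq_bigr => j j_in do rewrite a_skew 1?eq_sym ?moved //.
by rewrite prodrN big_split mulrA.
Qed.

Lemma prod_rev_cycle (s : {perm T}) y : odd_cycle_at s y ->
  \prod_i a i (rev_cycle s y i) = - \prod_i a i (s i).
Proof.
move=> odd_y; set C := porbit s y.
rewrite (bigID (mem C)) [in RHS](bigID (mem C)) /= -mulNr.
congr (_ * _); last by apply: eq_bigr => i /negbTE i_out; rewrite rev_cycleE /rev_cycle_fun i_out.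
rewrite (eq_bigr (fun i => a i (s^-1%g i))); last first.
  by move=> i i_in; rewrite rev_cycleE /rev_cycle_fun i_in.
rewrite prod_backwards; first by case/andP: odd_y => _ /= odd_C; rewrite -signr_odd odd_C mulN1r.
- by move=> j; rewrite mem_porbit_image.
- by move=> j; apply: odd_cycle_at_moved.
Qed.

Lemma sum_odd_cycles_eq0 : (2%:R : F) != 0 ->
  \sum_(s : {perm T} | has_odd_cycle s) (-1) ^+ s * \prod_i a i (s i) = 0.
Proof.
move=> two_neq0; set S := (X in X = 0).
have S_opp : S = - S.
  rewrite {1}/S (reindex_inj (can_inj (@flip_odd_cycleK _))) /=.
  rewrite (eq_bigl (@has_odd_cycle _)); last by move=> s; rewrite has_odd_cycle_flip.
  rewrite /S -sumrN; apply: eq_bigr => s odd_s.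
  have [y odd_y ->] := flip_odd_cycleE odd_s.
  by rewrite odd_perm_rev_cycle prod_rev_cycle // mulrN.
have : 2%:R * S = 0 by rewrite mulr_natl mulr2n {1}S_opp addNr.
by move/eqP; rewrite mulf_eq0 (negbTE two_neq0) => /eqP.
Qed.

End RescaledSkew.

Lemma det_rescaled_skew (F : fieldType) m (A B : 'M[F]_m) (d : 'rV[F]_m) :
  (forall i, d 0 i != 0) -> A^T *m diag_mx d = - (diag_mx d *m B) ->
  \det A = (-1) ^+ m * \det B.
Proof.
move=> d_neq0 skewAB.
have D_neq0 : \det (diag_mx d) != 0 by rewrite det_diag; apply/prodf_neq0 => i _.
apply: (mulIf D_neq0).
have := congr1 determinant skewAB.
by rewrite -scaleN1r detZ !det_mulmx det_tr => ->; rewrite [_ * \det B]mulrC mulrA.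
Qed.

(* The identity behind the skew-symmetry of A, for a = q_j, b = q_i. *)
Lemma rational_skew_identity (F : fieldType) (h a b : F) :
  a != 0 -> b != 0 -> 1 - a != 0 -> 1 - b != 0 -> b - a != 0 -> 1 - a * b != 0 ->
  h * (1 - b) * (1 + a) / ((1 - b / a) * (1 - b * a)) * (b * (1 + b) / (1 - b))
  = - (h * (1 - a) * (1 + b) / ((1 - a / b) * (1 - a * b)) * (a * (1 + a) / (1 - a))).
Proof.
move=> a0 b0 a1 b1 ab ab1.
have -> : 1 - a / b = (b - a) / b by field.
have -> : 1 - b / a = - ((b - a) / a) by field.
rewrite [b * a]mulrC; field.
by rewrite a1 b0 ab1 ab b1 a0 oppr_eq0 ab.
Qed.

(* Nonvanishing of the relevant polynomial expressions in the indeterminates,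
   each witnessed by one rational specialization. *)
Section GenericEntries.
Variable n : nat.

Lemma tofrac_neq0_eval (p : RFpoly n) (v : 'I_(n + n).+1 -> rat) :
  meval v p != 0 -> p%:F != 0 :> RF n.
Proof. by move=> h; rewrite tofrac_eq0; apply: contraNneq h => ->; rewrite meval0. Qed.

Lemma qv_neq0 (i : 'I_n) : qv i != 0.
Proof. by apply: (@tofrac_neq0_eval _ (fun _ => 1)); rewrite mevalXU. Qed.

Lemma onePq_neq0 (i : 'I_n) : 1 + qv i != 0.
Proof.
rewrite /qv -tofrac1 -tofracD; apply: (@tofrac_neq0_eval _ (fun _ => 0)).
by rewrite mevalD meval1 mevalXU addr0 oner_eq0.
Qed.

Lemma oneMq_neq0 (i : 'I_n) : 1 - qv i != 0.
Proof.
rewrite /qv -tofrac1 -tofracB; apply: (@tofrac_neq0_eval _ (fun _ => 0)).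
by rewrite mevalB meval1 mevalXU subr0 oner_eq0.
Qed.

Lemma oneMqq_neq0 (i j : 'I_n) : 1 - qv i * qv j != 0.
Proof.
rewrite /qv -tofrac1 -tofracM -tofracB; apply: (@tofrac_neq0_eval _ (fun _ => 0)).
by rewrite mevalB meval1 mevalM !mevalXU mulr0 subr0 oner_eq0.
Qed.

(* Distinct q's are distinct indeterminates. *)
Lemma qdiff_neq0 (i j : 'I_n) : i != j -> qv j - qv i != 0.
Proof.
move=> ij; rewrite /qv -tofracB.
apply: (@tofrac_neq0_eval _ (fun k => if k == inord (n + 1 + j) then 1 else 0)).
rewrite mevalB !mevalXU eqxx.
have -> : (inord (n + 1 + i) == inord (n + 1 + j) :> 'I_(n + n).+1) = false.
  apply/negbTE; apply: contra ij => /eqP /(congr1 val) /=.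
  have lt_idx (k : 'I_n) : (n + 1 + k < (n + n).+1)%N by have := ltn_ord k; lia.
  by rewrite !inordK // => /addnI/val_inj/eqP.
by rewrite subr0 oner_eq0.
Qed.

Lemma two_neq0 : (2%:R : RF n) != 0.
Proof.
have -> : (2%:R : RF n) = (1 + 1 : RFpoly n)%:F by rewrite tofracD tofrac1.
by apply: (@tofrac_neq0_eval _ (fun _ => 0)); rewrite mevalD meval1.
Qed.

Definition psi (i : 'I_n) : RF n := qv i * (1 + qv i) / (1 - qv i).

Lemma psi_neq0 i : psi i != 0.
Proof. by rewrite /psi !mulf_neq0 ?invr_eq0 ?qv_neq0 ?onePq_neq0 ?oneMq_neq0. Qed.

Lemma Amat_skew (c d : 'I_n -> RF n) (i j : 'I_n) : i != j ->
  Amat c j i * psi j = - (Amat d i j * psi i).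
Proof.
move=> ij; rewrite !mxE (negbTE ij) eq_sym (negbTE ij) /psi.
by apply: rational_skew_identity; rewrite ?qv_neq0 ?oneMq_neq0 ?oneMqq_neq0 ?qdiff_neq0.
Qed.

Lemma Achi_skew_trmx :
  (Achi n)^T *m diag_mx (\row_i psi i) = - (diag_mx (\row_i psi i) *m Anegchi n).
Proof.
have skew_entry i j : Achi n j i * psi j = - (psi i * Anegchi n i j).
  have [<-|ij] := eqVneq i j; first by rewrite !mxE eqxx mulrN opprK mulrC.
  by rewrite [psi i * _]mulrC; exact: Amat_skew.
rewrite mul_mx_diag mul_diag_mx; apply/matrixP => i j.
rewrite [LHS]mxE [RHS]mxE [X in - X]mxE [(_^T) _ _]mxE ![(\row_k psi k) _ _]mxE.
exact: skew_entry.
Qed.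

End GenericEntries.

Theorem mainTheorem16 (n : nat) :
  \det (Achi n) =
    \sum_(s : 'S_n | even_cycles s) (-1) ^+ s * msigma (Achi n) s
  /\ \det (Achi n) = (-1) ^+ n * \det (Anegchi n).
Proof.
split.
  have odd_terms_cancel :
      \sum_(s : 'S_n | has_odd_cycle s) (-1) ^+ s * \prod_i Achi n i (s i) = 0.
    apply: sum_odd_cycles_eq0 (@psi_neq0 n) _ (@two_neq0 n).
    by move=> i j; apply: Amat_skew.
  rewrite /determinant (bigID (@has_odd_cycle _)) /= odd_terms_cancel add0r.
  by apply: eq_bigl => s; rewrite even_cyclesE.
apply: (det_rescaled_skew _ (@Achi_skew_trmx n)) => i.
by rewrite mxE psi_neq0.
Qed.
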